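(* Let $J=JCK(Z,\delta)$. Then $\dim_{\mathbb F}\mathrm{Inder}(J)_{\bar0}=4\dim_{\mathbb F}Z=\dim_{\mathbb F}J_{\bar0}$ (dimensions as cardinals).
   Context: Let $\mathbb F$ be a field of characteristic $\neq 2$, $Z$ a unital commutative associative $\mathbb F$-algebra, and $\delta$ a derivation of $Z$ such that $Z\delta(Z)=Z$ (the $\mathbb F$-span of all products $f\delta(g)$, $f,g\in Z$, is $Z$). The Cheng-Kac Jordan superalgebra $J=JCK(Z,\delta)=J_{\bar0}\oplus J_{\bar1}$ is defined as follows: $J_{\bar0}=Z1\oplus Zw_1\oplus Zw_2\oplus Zw_3$ and $J_{\bar1}=Zx\oplus Zx_1\oplus Zx_2\oplus Zx_3$ are free $Z$-modules of rank 4; $J_{\bar0}$ is the $Z$-algebra $(\mathbb F1\oplus\mathbb Fw_1\oplus\mathbb Fw_2\oplus\mathbb Fw_3)\otimes_{\mathbb F}Z$ with $1$ the identity, $w_1^2=w_2^2=1$, $w_3^2=-1$, $w_iw_j=0$ for $i\ne j$. For $f,g\in Z$ and $i,j\in\{1,2,3\}$ the remaining products are: $f(gx)=(fg)x$, $f(gx_j)=(fg)x_j$, $(fw_i)(gx)=(\delta(f)g)x_i$, $(fw_i)(gx_j)=-(fg)x_{i\times j}$, $(fx)(gx)=\delta(f)g-f\delta(g)$, $(fx)(gx_j)=-(fg)w_j$, $(fx_i)(gx)=(fg)w_i$, $(fx_i)(gx_j)=0$, extended by supercommutativity ($ab=(-1)^{|a||b|}ba$), where $x_{1\times2}=-x_{2\times1}=x_3$,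 $x_{1\times3}=-x_{3\times1}=x_2$, $x_{3\times2}=-x_{2\times3}=x_1$, $x_{i\times i}=0$. $D(a,b)$ is the map $c\mapsto a(bc)-(-1)^{|a||b|}b(ac)$, and $\mathrm{Inder}(J)$ is the span of all $D(a,b)$, $a,b\in J$ homogeneous. *)

From HB Require Import structures.
From mathcomp Require Import all_boot all_order all_algebra.
Set Implicit Arguments. Unset Strict Implicit. Unset Printing Implicit Defensive.
Import GRing.Theory.
Local Open Scope ring_scope.

(* An element of J = JCK(Z, delta), as its 8 coordinates over the free
   Z-module basis:  e0*1 + e1*w1 + e2*w2 + e3*w3  (even part)
                  + o0*x + o1*x1 + o2*x2 + o3*x3    (odd part). *)
Record jck (Z : Type) : Type := JCK {
  je0 : Z; je1 : Z; je2 : Z; je3 : Z;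
  jo0 : Z; jo1 : Z; jo2 : Z; jo3 : Z }.

Section JCKdef.
Variables (F : fieldType) (Z : comAlgType F) (delta : Z -> Z).

Definition jzero : jck Z := JCK 0 0 0 0 0 0 0 0.

Definition jadd (a b : jck Z) : jck Z :=
  JCK (je0 a + je0 b) (je1 a + je1 b) (je2 a + je2 b) (je3 a + je3 b)
      (jo0 a + jo0 b) (jo1 a + jo1 b) (jo2 a + jo2 b) (jo3 a + jo3 b).

Definition jopp (a : jck Z) : jck Z :=
  JCK (- je0 a) (- je1 a) (- je2 a) (- je3 a)
      (- jo0 a) (- jo1 a) (- jo2 a) (- jo3 a).

Definition jscale (c : F) (a : jck Z) : jck Z :=
  JCK (c *: je0 a) (c *: je1 a) (c *: je2 a) (c *: je3 a)
      (c *: jo0 a) (c *: jo1 a) (c *: jo2 a) (c *: jo3 a).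

(* The (bilinear extension of the) Cheng-Kac product, expanded on the basis:
   1 identity; w1^2 = w2^2 = 1, w3^2 = -1, w_i w_j = 0 (i<>j);
   (f w_i)(g x) = (delta f g) x_i ; (f w_i)(g x_j) = -(fg) x_{i x j};
   (f x)(g x) = delta f g - f delta g ; (f x)(g x_j) = -(fg) w_j ;
   (f x_i)(g x) = (fg) w_i ; (f x_i)(g x_j) = 0; plus supercommutativity. *)
Definition jmul (a b : jck Z) : jck Z :=
  let a0 := je0 a in let a1 := je1 a in let a2 := je2 a in let a3 := je3 a in
  let p := jo0 a in let p1 := jo1 a in let p2 := jo2 a in let p3 := jo3 a in
  let b0 := je0 b in let b1 := je1 b in let b2 := je2 b in let b3 := je3 b in
  let q := jo0 b in let q1 := jo1 b in let q2 := jo2 b in let q3 := jo3 b in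
  JCK (a0 * b0 + a1 * b1 + a2 * b2 - a3 * b3 + (delta p * q - p * delta q))
      (a0 * b1 + a1 * b0 - p * q1 + p1 * q)
      (a0 * b2 + a2 * b0 - p * q2 + p2 * q)
      (a0 * b3 + a3 * b0 - p * q3 + p3 * q)
      (a0 * q + b0 * p)
      (a0 * q1 + b0 * p1 + delta a1 * q + delta b1 * p
         + (a2 * q3 - a3 * q2) + (b2 * p3 - b3 * p2))
      (a0 * q2 + b0 * p2 + delta a2 * q + delta b2 * p
         + (a3 * q1 - a1 * q3) + (b3 * p1 - b1 * p3))
      (a0 * q3 + b0 * p3 + delta a3 * q + delta b3 * p
         + (a2 * q1 - a1 * q2) + (b2 * p1 - b1 * p2)).

Definition jeven (a : jck Z) : Prop :=
  jo0 a = 0 /\ jo1 a = 0 /\ jo2 a = 0 /\ jo3 a = 0.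
Definition jodd (a : jck Z) : Prop :=
  je0 a = 0 /\ je1 a = 0 /\ je2 a = 0 /\ je3 a = 0.

Definition jhom (p : bool) (a : jck Z) : Prop :=
  if p then jodd a else jeven a.

Definition jD (pa pb : bool) (a b : jck Z) : jck Z -> jck Z :=
  fun c => if pa && pb then jadd (jmul a (jmul b c)) (jmul b (jmul a c))
           else jadd (jmul a (jmul b c)) (jopp (jmul b (jmul a c))).

Definition Dgen (f : jck Z -> jck Z) : Prop :=
  exists pa pb a b, jhom pa a /\ jhom pb b /\ f = jD pa pb a b.

Definition fadd (f g : jck Z -> jck Z) : jck Z -> jck Z := fun v => jadd (f v) (g v).
Definition fscale (c : F) (f : jck Z -> jck Z) : jck Z -> jck Z := fun v => jscale c (f v).

Inductive inder : (jck Z -> jck Z) -> Prop :=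
  | inder0 : inder (fun _ => jzero)
  | inderS (c : F) (f g : jck Z -> jck Z) :
      Dgen f -> inder g -> inder (fadd (fscale c f) g).

Definition even_map (d : jck Z -> jck Z) : Prop :=
  forall v, (jeven v -> jeven (d v)) /\ (jodd v -> jodd (d v)).

Definition inder_even (d : jck Z -> jck Z) : Prop := inder d /\ even_map d.

Definition z4add (x y : Z * Z * Z * Z) : Z * Z * Z * Z :=
  (x.1.1.1 + y.1.1.1, x.1.1.2 + y.1.1.2, x.1.2 + y.1.2, x.2 + y.2).
Definition z4scale (c : F) (x : Z * Z * Z * Z) : Z * Z * Z * Z :=
  (c *: x.1.1.1, c *: x.1.1.2, c *: x.1.2, c *: x.2).

(* The F-subspace {t | P t} of the F-vector space (T, tadd, tscale) is
   F-linearly isomorphic to Z^4, i.e. has F-dimension (as a cardinal)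
   equal to 4 dim_F Z. *)
Definition iso_to_Z4 (T : Type) (tadd : T -> T -> T) (tscale : F -> T -> T)
    (P : T -> Prop) : Prop :=
  exists phi : Z * Z * Z * Z -> T,
    (forall c x y, phi (z4add (z4scale c x) y) = tadd (tscale c (phi x)) (phi y))
    /\ injective phi
    /\ (forall t, P t <-> exists x, t = phi x).

End JCKdef.

From HB Require Import structures.
From mathcomp Require Import all_boot all_order all_algebra ring.
From Stdlib Require Import FunctionalExtensionality.
Import GRing.Theory.
Local Open Scope ring_scope.

(* An even element of Inder(J) is a combination of generators D(a, b).  Those with
   a and b of different parity are odd maps, and an odd additive map that is
   also even vanishes, so only the D(a, b) with a, b of equal parity matter.  A
   direct computation shows that each of these equals
     D_z = D(x, z0 x) + D(w1, z1 w2) + D(w1, z2 w3) + D(w2, z3 w3)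
   for some z in Z^4, so Inder(J)_0 is the image of the F-linear map z |-> D_z.
   This map is injective: D_z(w1) and D_z(w2) return z1, z2, z3, and the
   x-coordinate of D_z(g x) is g delta(z0) - 2 z0 delta(g); taking g = 1 recovers
   delta(z0), hence 2 z0 delta(Z) = 0, and char F <> 2 together with
   Z delta(Z) = Z gives z0 = 0. *)

Section ChengKac.
Variables (F : fieldType) (Z : comAlgType F).

Definition jx (h : Z) : jck Z := JCK 0 0 0 0 h 0 0 0.
Definition jw1 (h : Z) : jck Z := JCK 0 h 0 0 0 0 0 0.
Definition jw2 (h : Z) : jck Z := JCK 0 0 h 0 0 0 0 0.
Definition jw3 (h : Z) : jck Z := JCK 0 0 0 h 0 0 0 0.

Ltac jck_unfold :=
  cbv beta iota zeta delta [fadd fscale jD jmul jadd jopp jscale jzero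
    jx jw1 jw2 jw3 je0 je1 je2 je3 jo0 jo1 jo2 jo3 andb fst snd].

Lemma jaddA (x y z : jck Z) : jadd x (jadd y z) = jadd (jadd x y) z.
Proof.
by case: x y z => ? ? ? ? ? ? ? ? [? ? ? ? ? ? ? ?] [? ? ? ? ? ? ? ?];
  jck_unfold; congr JCK; ring.
Qed.

Lemma jaddC (x y : jck Z) : jadd x y = jadd y x.
Proof.
by case: x y => ? ? ? ? ? ? ? ? [? ? ? ? ? ? ? ?]; jck_unfold; congr JCK; ring.
Qed.

Lemma jaddr0 (x : jck Z) : jadd x (jzero Z) = x.
Proof. by case: x => ? ? ? ? ? ? ? ?; jck_unfold; congr JCK; ring. Qed.

Lemma jaddACA (x y z t : jck Z) :
  jadd (jadd x y) (jadd z t) = jadd (jadd x z) (jadd y t).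
Proof. by rewrite -!jaddA (jaddA y) (jaddC y) -jaddA. Qed.

Lemma joppD (x y : jck Z) : jopp (jadd x y) = jadd (jopp x) (jopp y).
Proof.
by case: x y => ? ? ? ? ? ? ? ? [? ? ? ? ? ? ? ?]; jck_unfold; congr JCK; ring.
Qed.

Lemma jscaleDr (k : F) (x y : jck Z) :
  jscale k (jadd x y) = jadd (jscale k x) (jscale k y).
Proof.
by case: x y => ? ? ? ? ? ? ? ? [? ? ? ? ? ? ? ?]; jck_unfold;
  congr JCK; exact: scalerDr.
Qed.

Lemma jscale1 (x : jck Z) : jscale 1 x = x.
Proof. by case: x => ? ? ? ? ? ? ? ?; jck_unfold; rewrite !scale1r. Qed.

Lemma faddA (f g h : jck Z -> jck Z) : fadd f (fadd g h) = fadd (fadd f g) h.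
Proof. by apply: functional_extensionality => v; rewrite /fadd jaddA. Qed.

Lemma faddCA (f g h : jck Z -> jck Z) : fadd f (fadd g h) = fadd g (fadd f h).
Proof.
by apply: functional_extensionality => v; rewrite /fadd !jaddA (jaddC (f v)).
Qed.

Lemma jeven_add (x y : jck Z) : jeven x -> jeven y -> jeven (jadd x y).
Proof.
case: x y => ? ? ? ? ? ? ? ? [? ? ? ? ? ? ? ?].
by rewrite /jeven /= => -[-> [-> [-> ->]]] [-> [-> [-> ->]]]; rewrite !addr0.
Qed.

Lemma jodd_add (x y : jck Z) : jodd x -> jodd y -> jodd (jadd x y).
Proof.
case: x y => ? ? ? ? ? ? ? ? [? ? ? ? ? ? ? ?].
by rewrite /jodd /= => -[-> [-> [-> ->]]] [-> [-> [-> ->]]]; rewrite !addr0.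
Qed.

Lemma jeven_scale (k : F) (x : jck Z) : jeven x -> jeven (jscale k x).
Proof.
case: x => ? ? ? ? ? ? ? ?.
by rewrite /jeven /= => -[-> [-> [-> ->]]]; rewrite !scaler0.
Qed.

Lemma jodd_scale (k : F) (x : jck Z) : jodd x -> jodd (jscale k x).
Proof.
case: x => ? ? ? ? ? ? ? ?.
by rewrite /jodd /= => -[-> [-> [-> ->]]]; rewrite !scaler0.
Qed.

Lemma jeven_addr (x y : jck Z) : jeven x -> jeven (jadd x y) -> jeven y.
Proof.
case: x y => ? ? ? ? ? ? ? ? [? ? ? ? ? ? ? ?].
by rewrite /jeven /= => -[-> [-> [-> ->]]]; rewrite !add0r.
Qed.

Lemma jodd_addr (x y : jck Z) : jodd x -> jodd (jadd x y) -> jodd y.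
Proof.
case: x y => ? ? ? ? ? ? ? ? [? ? ? ? ? ? ? ?].
by rewrite /jodd /= => -[-> [-> [-> ->]]]; rewrite !add0r.
Qed.

Lemma jeven_odd_eq0 (x : jck Z) : jeven x -> jodd x -> x = jzero Z.
Proof.
case: x => ? ? ? ? ? ? ? ?.
by rewrite /jeven /jodd /= => -[-> [-> [-> ->]]] [-> [-> [-> ->]]].
Qed.

Definition jeven_part (v : jck Z) : jck Z :=
  JCK (je0 v) (je1 v) (je2 v) (je3 v) 0 0 0 0.
Definition jodd_part (v : jck Z) : jck Z :=
  JCK 0 0 0 0 (jo0 v) (jo1 v) (jo2 v) (jo3 v).

Lemma jeven_odd_parts (v : jck Z) : v = jadd (jeven_part v) (jodd_part v).
Proof.
by case: v => ? ? ? ? ? ? ? ?; jck_unfold; rewrite /= !(addr0, add0r).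
Qed.

Lemma jeven_iso :
  iso_to_Z4 Z (@jadd F Z) (@jscale F Z) (@jeven F Z).
Proof.
exists (fun z => JCK z.1.1.1 z.1.1.2 z.1.2 z.2 0 0 0 0); split.
  by move=> k [[[? ?] ?] ?] [[[? ?] ?] ?]; rewrite /jadd /jscale /= scaler0 addr0.
split=> [[[[? ?] ?] ?] [[[? ?] ?] ?] /= [-> -> -> ->] // | t].
split; last by move=> [z ->].
case: t => t0 t1 t2 t3 ? ? ? ?; rewrite /jeven /= => -[-> [-> [-> ->]]].
by exists (t0, t1, t2, t3).
Qed.

Definition odd_map (d : jck Z -> jck Z) : Prop :=
  forall v, (jeven v -> jodd (d v)) /\ (jodd v -> jeven (d v)).

Definition jadditive (d : jck Z -> jck Z) : Prop :=
  forall u v, d (jadd u v) = jadd (d u) (d v).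

Lemma odd_map_fadd (f g : jck Z -> jck Z) :
  odd_map f -> odd_map g -> odd_map (fadd f g).
Proof.
move=> hf hg v; have [f1 f2] := hf v; have [g1 g2] := hg v.
by split=> hv; [apply: jodd_add; [apply: f1 | apply: g1]
               | apply: jeven_add; [apply: f2 | apply: g2]].
Qed.

Lemma odd_map_fscale (k : F) (f : jck Z -> jck Z) :
  odd_map f -> odd_map (fscale k f).
Proof.
move=> hf v; have [f1 f2] := hf v.
by split=> hv; [apply: jodd_scale; apply: f1 | apply: jeven_scale; apply: f2].
Qed.

Lemma jadditive_fadd (f g : jck Z -> jck Z) :
  jadditive f -> jadditive g -> jadditive (fadd f g).
Proof. by move=> hf hg u v; rewrite /fadd hf hg jaddACA. Qed.

Lemma jadditive_fscale (k : F) (f : jck Z -> jck Z) :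
  jadditive f -> jadditive (fscale k f).
Proof. by move=> hf u v; rewrite /fscale hf jscaleDr. Qed.

Lemma odd_additive_eq0 (f psi : jck Z -> jck Z) :
  even_map f -> odd_map psi -> jadditive psi -> even_map (fadd f psi) ->
  psi = fun _ => jzero Z.
Proof.
move=> f_even psi_odd psi_add fpsi_even; apply: functional_extensionality => v.
have ve : jeven (jeven_part v) by [].
have vo : jodd (jodd_part v) by [].
have psi_ve : psi (jeven_part v) = jzero Z.
  apply: jeven_odd_eq0; last exact: (psi_odd _).1.
  exact: jeven_addr ((f_even _).1 ve) ((fpsi_even _).1 ve).
have psi_vo : psi (jodd_part v) = jzero Z.
  apply: jeven_odd_eq0; first exact: (psi_odd _).2.
  exact: jodd_addr ((f_even _).2 vo) ((fpsi_even _).2 vo).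
by rewrite (jeven_odd_parts v) psi_add psi_ve psi_vo jaddr0.
Qed.

Variable delta : Z -> Z.
Hypothesis derD : forall f g : Z, delta (f + g) = delta f + delta g.
Hypothesis derZ : forall (c : F) (f : Z), delta (c *: f) = c *: delta f.
Hypothesis derM : forall f g : Z, delta (f * g) = delta f * g + f * delta g.

Lemma der0 : delta 0 = 0.
Proof. by apply: (addrI (delta 0)); rewrite -derD !addr0. Qed.

Lemma derN x : delta (- x) = - delta x.
Proof. by apply: (addrI (delta x)); rewrite -derD !subrr der0. Qed.

Lemma der1 : delta 1 = 0.
Proof.
have h := derM 1 1; rewrite !mulr1 !mul1r in h.
by apply: (addrI (delta 1)); rewrite addr0 -h.
Qed.

Ltac zring := rewrite ?(derD, derM, derN, der0, der1, derZ); ring.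

Lemma jmulDr (a u v : jck Z) :
  jmul delta a (jadd u v) = jadd (jmul delta a u) (jmul delta a v).
Proof.
by case: a u v => ? ? ? ? ? ? ? ? [? ? ? ? ? ? ? ?] [? ? ? ? ? ? ? ?];
  jck_unfold; congr JCK; zring.
Qed.

Definition innerD (z : Z * Z * Z * Z) : jck Z -> jck Z :=
  fadd (jD delta true true (jx 1) (jx z.1.1.1))
 (fadd (jD delta false false (jw1 1) (jw2 z.1.1.2))
 (fadd (jD delta false false (jw1 1) (jw3 z.1.2))
       (jD delta false false (jw2 1) (jw3 z.2)))).

Lemma innerDE z0 z1 z2 z3 c0 c1 c2 c3 c4 c5 c6 c7 :
  innerD (z0, z1, z2, z3) (JCK c0 c1 c2 c3 c4 c5 c6 c7) =
  JCK (- (z0 * delta c0) *+ 2)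
      (z1 * c2 - z2 * c3 - (z0 * delta c1) *+ 2)
      (- (z1 * c1) - z3 * c3 - (z0 * delta c2) *+ 2)
      (- (z2 * c1) - z3 * c2 - (z0 * delta c3) *+ 2)
      (c4 * delta z0 - (z0 * delta c4) *+ 2)
      (z1 * c6 - z2 * c7 + c4 * delta z3 - c5 * delta z0 - (z0 * delta c5) *+ 2)
      (- (z1 * c5) - c4 * delta z2 - z3 * c7 - c6 * delta z0 - (z0 * delta c6) *+ 2)
      (- (c4 * delta z1) - z2 * c5 - z3 * c6 - c7 * delta z0 - (z0 * delta c7) *+ 2).
Proof. rewrite /innerD; jck_unfold; congr JCK; zring. Qed.

Lemma innerD_even (z : Z * Z * Z * Z) : even_map (innerD z).
Proof.
case: z => [[[z0 z1] z2] z3] [c0 c1 c2 c3 c4 c5 c6 c7].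
by rewrite innerDE /jeven /jodd /=;
  split=> -[-> [-> [-> ->]]]; (split; [|split; [|split]]); zring.
Qed.

Lemma innerD_linear (k : F) (x y : Z * Z * Z * Z) :
  innerD (z4add (z4scale k x) y) = fadd (fscale k (innerD x)) (innerD y).
Proof.
case: x y => [[[x0 x1] x2] x3] [[[y0 y1] y2] y3].
apply: functional_extensionality => -[c0 c1 c2 c3 c4 c5 c6 c7].
rewrite /z4add /z4scale /fadd /fscale /= !innerDE !derD !derZ; jck_unfold.
(* With k%:A opaque, scalings become products that ring can normalise. *)
pose K : Z := k%:A; have scaleE t : k *: t = K * t by rewrite mulr_algl.
by congr JCK; rewrite !scaleE; ring.
Qed.

Lemma inder_fadd_jD pa pb (a b : jck Z) (g : jck Z -> jck Z) :
  jhom pa a -> jhom pb b -> inder delta g ->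
  inder delta (fadd (jD delta pa pb a b) g).
Proof.
move=> ha hb hg.
have -> : fadd (jD delta pa pb a b) g = fadd (fscale 1 (jD delta pa pb a b)) g.
  by apply: functional_extensionality => v; rewrite /fadd /fscale jscale1.
by apply: inderS => //; exists pa, pb, a, b.
Qed.

Lemma innerD_inder (z : Z * Z * Z * Z) : inder delta (innerD z).
Proof.
have -> : innerD z = fadd (jD delta true true (jx 1) (jx z.1.1.1))
    (fadd (jD delta false false (jw1 1) (jw2 z.1.1.2))
    (fadd (jD delta false false (jw1 1) (jw3 z.1.2))
    (fadd (jD delta false false (jw2 1) (jw3 z.2)) (fun _ => jzero Z)))).
  by apply: functional_extensionality => v; rewrite /innerD /fadd jaddr0.
apply: (inder_fadd_jD true true) => //.
do 2 apply: (inder_fadd_jD false false) => //.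
exact: (inder_fadd_jD false false) (inder0 delta).
Qed.

Definition Dcoef_even (a b : jck Z) : Z * Z * Z * Z :=
  (0, je1 a * je2 b - je2 a * je1 b, je1 a * je3 b - je3 a * je1 b,
   je2 a * je3 b - je3 a * je2 b).

Definition Dcoef_odd (a b : jck Z) : Z * Z * Z * Z :=
  (jo0 a * jo0 b, - (jo0 a * jo3 b + jo3 a * jo0 b),
   - (jo0 a * jo2 b + jo2 a * jo0 b), jo0 a * jo1 b + jo1 a * jo0 b).

Lemma jD_even_even (a b : jck Z) :
  jeven a -> jeven b -> jD delta false false a b = innerD (Dcoef_even a b).
Proof.
case: a b => a0 a1 a2 a3 ? ? ? ? [b0 b1 b2 b3 ? ? ? ?].
rewrite /jeven /= => -[-> [-> [-> ->]]] [-> [-> [-> ->]]].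
apply: functional_extensionality => -[c0 c1 c2 c3 c4 c5 c6 c7].
by rewrite /Dcoef_even /= innerDE; jck_unfold; congr JCK; zring.
Qed.

Lemma jD_odd_odd (a b : jck Z) :
  jodd a -> jodd b -> jD delta true true a b = innerD (Dcoef_odd a b).
Proof.
case: a b => ? ? ? ? p p1 p2 p3 [? ? ? ? q q1 q2 q3].
rewrite /jodd /= => -[-> [-> [-> ->]]] [-> [-> [-> ->]]].
apply: functional_extensionality => -[c0 c1 c2 c3 c4 c5 c6 c7].
by rewrite /Dcoef_odd /= innerDE; jck_unfold; congr JCK; zring.
Qed.

Lemma jD_same_parity p (a b : jck Z) :
  jhom p a -> jhom p b -> exists z, jD delta p p a b = innerD z.
Proof.
case: p => ha hb; first by exists (Dcoef_odd a b); exact: jD_odd_odd.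
by exists (Dcoef_even a b); exact: jD_even_even.
Qed.

Lemma jD_mixed_odd pa pb (a b : jck Z) :
  pa != pb -> jhom pa a -> jhom pb b -> odd_map (jD delta pa pb a b).
Proof.
case: a b => a0 a1 a2 a3 p p1 p2 p3 [b0 b1 b2 b3 q q1 q2 q3].
case: pa; case: pb => //= _; rewrite /odd_map /jeven /jodd /=;
  move=> [-> [-> [-> ->]]] [-> [-> [-> ->]]] [c0 c1 c2 c3 c4 c5 c6 c7];
  split=> /= -[-> [-> [-> ->]]]; jck_unfold; (split; [|split; [|split]]); zring.
Qed.

Lemma jD_additive pa pb (a b : jck Z) : jadditive (jD delta pa pb a b).
Proof.
by move=> u v; rewrite /jD; case: (pa && pb); rewrite !jmulDr ?joppD jaddACA.
Qed.

Lemma inder_decomp (d : jck Z -> jck Z) : inder delta d ->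
  exists z psi, [/\ odd_map psi, jadditive psi & d = fadd (innerD z) psi].
Proof.
elim=> [|k f g [pa [pb [a [b [ha [hb ->]]]]]] _ [z [psi [psi_odd psi_add ->]]]].
  exists (0, 0, 0, 0), (fun _ => jzero Z).
  split=> //; first by move=> u v; rewrite jaddr0.
  apply: functional_extensionality => -[c0 c1 c2 c3 c4 c5 c6 c7].
  by rewrite /fadd innerDE jaddr0; jck_unfold; congr JCK; zring.
move: hb; have [<- hb | pab hb] := eqVneq pa pb.
  have [w ->] := jD_same_parity _ _ _ ha hb.
  by exists (z4add (z4scale k w) z), psi; rewrite innerD_linear faddA.
exists z, (fadd (fscale k (jD delta pa pb a b)) psi); split; last exact: faddCA.
  by apply: odd_map_fadd => //; apply: odd_map_fscale; exact: jD_mixed_odd.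
by apply: jadditive_fadd => //; apply: jadditive_fscale; exact: jD_additive.
Qed.

Lemma inder_even_innerD (d : jck Z -> jck Z) :
  inder_even delta d -> exists z, d = innerD z.
Proof.
move=> [/inder_decomp [z [psi [psi_odd psi_add ->]]] d_even].
exists z; rewrite (odd_additive_eq0 _ _ (innerD_even z) psi_odd psi_add d_even).
by apply: functional_extensionality => v; rewrite /fadd jaddr0.
Qed.

Lemma innerD_jw1 (z : Z * Z * Z * Z) :
  innerD z (jw1 1) = JCK 0 0 (- z.1.1.2) (- z.1.2) 0 0 0 0.
Proof.
by case: z => [[[z0 z1] z2] z3]; rewrite /jw1 innerDE /=; congr JCK; zring.
Qed.

Lemma innerD_jw2 (z : Z * Z * Z * Z) :
  innerD z (jw2 1) = JCK 0 z.1.1.2 0 (- z.2) 0 0 0 0.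
Proof.
by case: z => [[[z0 z1] z2] z3]; rewrite /jw2 innerDE /=; congr JCK; zring.
Qed.

Lemma innerD_jx (z : Z * Z * Z * Z) (g : Z) :
  innerD z (jx g) =
  JCK 0 0 0 0 (g * delta z.1.1.1 - (z.1.1.1 * delta g) *+ 2)
      (g * delta z.2) (- (g * delta z.1.2)) (- (g * delta z.1.1.2)).
Proof.
by case: z => [[[z0 z1] z2] z3]; rewrite /jx innerDE /=; congr JCK; zring.
Qed.

Hypothesis two_neq0 : (2%:R : F) != 0.
Hypothesis der_spans : forall z : Z, exists (n : nat) (f g : 'I_n -> Z),
  z = \sum_(i < n) f i * delta (g i).

Lemma mulrn2_eq0 (V : lmodType F) (v : V) : v *+ 2 = 0 -> v = 0.
Proof.
by rewrite -scaler_nat => /eqP; rewrite scaler_eq0 (negbTE two_neq0) => /eqP.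
Qed.

Lemma der_annihilator_eq0 (u : Z) : (forall g, u * delta g = 0) -> u = 0.
Proof.
move=> hu; have [n [f [g one_eq]]] := der_spans 1.
by rewrite -[u]mulr1 one_eq mulr_sumr big1 // => i _; rewrite mulrCA hu mulr0.
Qed.

Lemma innerD_inj : injective innerD.
Proof.
move=> [[[x0 x1] x2] x3] [[[y0 y1] y2] y3] e.
have /= := congr1 (fun d => d (jw1 1)) e.
rewrite !innerD_jw1 => -[/oppr_inj -> /oppr_inj ->].
have /= := congr1 (fun d => d (jw2 1)) e; rewrite !innerD_jw2 => -[_ /oppr_inj ->].
have exg g : g * delta x0 - (x0 * delta g) *+ 2 = g * delta y0 - (y0 * delta g) *+ 2.
  by have /= := congr1 (fun d => d (jx g)) e; rewrite !innerD_jx => -[].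
have dx : delta x0 = delta y0.
  by have := exg 1; rewrite der1 !mulr0 !mul0rn !subr0 !mul1r.
suff /eqP : x0 - y0 = 0 by rewrite subr_eq0 => /eqP ->.
apply: der_annihilator_eq0 => g; apply: mulrn2_eq0.
have := exg g; rewrite dx => /addrI /oppr_inj exg'.
by rewrite mulrBl mulrnBl exg' subrr.
Qed.

Lemma inder_even_iso :
  iso_to_Z4 Z (@fadd F Z) (@fscale F Z) (inder_even delta).
Proof.
exists innerD; split; first exact: innerD_linear.
split=> [|d]; first exact: innerD_inj.
split; first exact: inder_even_innerD.
by move=> [z ->]; split; [exact: innerD_inder | exact: innerD_even].
Qed.
End ChengKac.


Theorem corollary4p2 (F : fieldType) (Z : comAlgType F) (delta : Z -> Z)
  (hchar : (2%:R : F) != 0)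
  (hder_add : forall f g : Z, delta (f + g) = delta f + delta g)
  (hder_scale : forall (c : F) (f : Z), delta (c *: f) = c *: delta f)
  (hder_leib : forall f g : Z, delta (f * g) = delta f * g + f * delta g)
  (hspan : forall z : Z, exists (n : nat) (f g : 'I_n -> Z),
             z = \sum_(i < n) f i * delta (g i)) :
  iso_to_Z4 Z (@fadd F Z) (@fscale F Z) (inder_even delta)
  /\ iso_to_Z4 Z (@jadd F Z) (@jscale F Z) (@jeven F Z).
Proof. by split; [exact: inder_even_iso | exact: jeven_iso]. Qed.
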